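(* Let $n\ge1$, let $H,K\le S_n$, and let $\phi:H\to\mathbb C$, $\psi:K\to\mathbb C$ be arbitrary functions. The following are equivalent: (1) $d_\phi^H(A)=d_\psi^K(A)$ for every $A\in\mathbb S_n(\mathbb C)$; (2) $d_\phi^H(S_\sigma)=d_\psi^K(S_\sigma)$ for every $\sigma\in S_n$; (3) $\sum_{\tau\in[\sigma]}\hat\phi(\tau)=\sum_{\tau\in[\sigma]}\hat\psi(\tau)$ for every $\sigma\in S_n$.
   Context: $S_n$ is the symmetric group on $[n]$; $\mathbb S_n(\mathbb C)$ is the set of complex symmetric $n\times n$ matrices. For $G\le S_n$ and $\chi:G\to\mathbb C$, $\hat\chi:S_n\to\mathbb C$ is the extension of $\chi$ by $0$ outside $G$, and $d_\chi^G(A)=\sum_{\sigma\in S_n}\hat\chi(\sigma)\prod_{i=1}^n A_{i\,\sigma(i)}$ for $A\in M_n(\mathbb C)$. For $\sigma\in S_n$, $S_\sigma$ is the $n\times n$ $0/1$ matrix with $(S_\sigma)_{ij}=1$ iff $\sigma(i)=j$ or $\sigma^{-1}(i)=j$. If $\sigma=\sigma_1\cdots\sigma_k$ is the decomposition of $\sigma$ into pairwise disjoint cycles of length at least $2$, then $[\sigma]=\{\sigma_1^{n_1}\cdots\sigma_k^{n_k}:n_j\in\{1,-1\}\}$ (a set; $[\mathrm{id}]=\{\mathrm{id}\}$). *)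

From HB Require Import structures.
From mathcomp Require Import all_boot all_order all_fingroup all_algebra.
Set Implicit Arguments. Unset Strict Implicit. Unset Printing Implicit Defensive.
Import Order.TTheory GRing.Theory Num.Theory.
Local Open Scope ring_scope.

Definition ext0 (C : nzRingType) n (G : {group 'S_n}) (chi : 'S_n -> C)
  (s : 'S_n) : C := if s \in G then chi s else 0.

Definition gimm (C : comNzRingType) n (G : {group 'S_n}) (chi : 'S_n -> C)
  (A : 'M[C]_n) : C :=
  \sum_(s : 'S_n) ext0 G chi s * \prod_(i < n) A i (s i).

Definition Smat (C : nzRingType) n (s : 'S_n) : 'M[C]_n :=
  \matrix_(i, j) (((s i == j) || ((s^-1)%g i == j)) : nat)%:R.

(* The cycles of s of length >= 2 are restr_perm O s for the orbits O of s
   with #|O| >= 2.  [s] = { prod_O c_O^{+-1} }. *)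
Definition cycle_class n (s : 'S_n) : {set 'S_n} :=
  [set (\prod_(O in porbits s | (1 < #|O|)%N)
          (if e O then restr_perm O s else (restr_perm O s)^-1))%g
   | e : {ffun {set 'I_n} -> bool}].

Definition is_symmetric (C : nzRingType) n (A : 'M[C]_n) : Prop := A^T = A.

From HB Require Import structures.
From mathcomp Require Import all_boot all_order all_fingroup all_algebra.
Import Order.TTheory GRing.Theory Num.Theory.
Set Implicit Arguments. Unset Strict Implicit. Unset Printing Implicit Defensive.
Local Open Scope ring_scope.

(* The term of a permutation t in the expansion against S_s is 1 when
   t i \in {s i, s^-1 i} for all i (written t \in Ssupp s) and 0 otherwise.
   This is a preorder whose equivalence classes Sclass s are exactly the sets
   [s]: t \in Sclass s iff t reverses some of the cycles of s.  Reversing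
   cycles does not change the product of the entries of a symmetric matrix
   along a permutation, so d(A) is a combination of class sums (3 => 1); S_s
   is symmetric (1 => 2); and the sum over Ssupp s is the class sum of s plus
   sums over strictly smaller classes, so (2 => 3) by strong induction on
   #|Ssupp s|. *)

Section EquivalenceClassSums.
Variables (T : finType) (V : nmodType) (E : T -> {set T}).
Hypotheses (E_refl : forall t, t \in E t)
           (E_sym : forall s t, (t \in E s) = (s \in E t))
           (E_trans : forall r t s, r \in E t -> t \in E s -> r \in E s).

Lemma sum_classes_eq0 (F : T -> V) (X : {set T}) :
  {in X, forall t, {subset E t <= X}} ->
  {in X, forall t, \sum_(r in E t) F r = 0} ->
  \sum_(r in X) F r = 0.
Proof.
move: {2}#|X|.+1 (ltnSn #|X|) => k; elim: k X => [//|k IH] X ltXk Xclosed F0.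
have [->|[t tX]] := set_0Vmem X; first by rewrite big_set0.
rewrite (big_setID (E t)) /= (setIidPr _); last first.
  by apply/subsetP; apply: Xclosed.
rewrite F0 // add0r; apply: IH.
- rewrite ltnS in ltXk; apply: leq_trans ltXk.
  apply: proper_card; apply/properP.
  by split; [exact: subsetDl | exists t; rewrite // in_setD E_refl].
- move=> u; rewrite in_setD => /andP[utN uX] r ru.
  rewrite in_setD (Xclosed u uX r ru) andbT.
  by apply: contra utN => rt; apply: E_trans rt; rewrite E_sym.
- by move=> u; rewrite in_setD => /andP[_ /F0].
Qed.

End EquivalenceClassSums.

Section SmatSupport.
Variable T : finType.
Implicit Types (r s t : {perm T}) (x : T).

Definition Ssupp s : {set {perm T}} :=
  [set t : {perm T} | [forall i, (t i == s i) || (t i == (s^-1)%g i)]].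

Definition Sclass s : {set {perm T}} := [set t in Ssupp s | s \in Ssupp t].

Lemma SsuppP t s :
  reflect (forall i, (t i == s i) || (t i == (s^-1)%g i)) (t \in Ssupp s).
Proof. by rewrite inE; apply: (iffP forallP). Qed.

Lemma Ssupp_refl s : s \in Ssupp s.
Proof. by apply/SsuppP => i; rewrite eqxx. Qed.

Lemma Ssupp_trans r t s : r \in Ssupp t -> t \in Ssupp s -> r \in Ssupp s.
Proof.
move=> /SsuppP rt /SsuppP ts; apply/SsuppP => i.
case/orP: (rt i) => /eqP ->; first exact: ts.
set j := (t^-1)%g i; have tj : t j = i by rewrite /j permKV.
case/orP: (ts j) => /eqP; rewrite tj => ->.
  by rewrite permK eqxx orbT.
by rewrite permKV eqxx.
Qed.

Lemma Sclass_refl s : s \in Sclass s.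
Proof. by rewrite inE Ssupp_refl. Qed.

Lemma Sclass_sym s t : (t \in Sclass s) = (s \in Sclass t).
Proof. by rewrite !inE andbC. Qed.

Lemma Sclass_trans r t s : r \in Sclass t -> t \in Sclass s -> r \in Sclass s.
Proof.
rewrite [r \in Sclass t]inE [t \in Sclass s]inE => /andP[rt tr] /andP[ts st].
by rewrite inE (Ssupp_trans rt ts) (Ssupp_trans st tr).
Qed.

Lemma Sclass_Ssupp t s : t \in Sclass s -> t \in Ssupp s.
Proof. by rewrite inE => /andP[]. Qed.

Lemma Ssupp_proper t s :
  t \in Ssupp s -> t \notin Sclass s -> Ssupp t \proper Ssupp s.
Proof.
move=> ts tNs; apply/properP; split.
  by apply/subsetP => r /Ssupp_trans; apply.
by exists s; [exact: Ssupp_refl | apply: contra tNs => st; rewrite inE ts st].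
Qed.

(* Where t \in Sclass s disagrees with s it must agree with s^-1, and being
   a permutation it then has to do so along the whole s-orbit. *)
Lemma Sclass_agree_perm s t x :
  t \in Sclass s -> (t (s x) == s (s x)) = (t x == s x).
Proof.
rewrite inE => /andP[/SsuppP ts /SsuppP st].
apply/idP/idP => [tsx|txs]; apply/negPn/negP.
- move=> txNs; have tx : t x = (s^-1)%g x.
    by move: (ts x); rewrite (negPf txNs) => /eqP.
  have tsx' : t (s x) = x.
    case/orP: (st x) => /eqP e; first by rewrite -e eqxx in txNs.
    by rewrite e permKV.
  have ssx : s (s x) = x by rewrite -(eqP tsx) tsx'.
  by move: txNs; rewrite tx -{1}ssx permK eqxx.
- move=> tsxN; have tsx : t (s x) = x.
    by move: (ts (s x)); rewrite (negPf tsxN) permK => /eqP.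
  case/orP: (st (s x)) => /eqP e; first by move: tsxN; rewrite -e eqxx.
  by move: tsxN; rewrite tsx e -(eqP txs) permK eqxx.
Qed.

Lemma Sclass_agree_expg s t x k :
  t \in Sclass s -> (t ((s ^+ k)%g x) == s ((s ^+ k)%g x)) = (t x == s x).
Proof.
move=> ts; elim: k => [|k IH]; first by rewrite expg0 perm1.
by rewrite expgSr permM Sclass_agree_perm.
Qed.

End SmatSupport.

Section PermOrbits.
Variable T : finType.
Implicit Types (s : {perm T}) (x y : T).

Lemma porbit_perm1 s y : porbit s (s y) = porbit s y.
Proof. by have := porbit_perm s 1 y; rewrite expg1. Qed.

Lemma mem_porbit_perm s x y : (s y \in porbit s x) = (y \in porbit s x).
Proof. by rewrite porbit_sym porbit_perm1 porbit_sym. Qed.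

Lemma mem_porbit_permV s x y : ((s^-1)%g y \in porbit s x) = (y \in porbit s x).
Proof. by rewrite -mem_porbit_perm permKV. Qed.

Lemma fixed_small_porbit s x : ~~ (1 < #|porbit s x|)%N -> s x = x.
Proof.
by rewrite -leqNgt => /card_le1_eqP; apply; rewrite ?mem_porbit_perm porbit_id.
Qed.

Lemma restr_porbitE s x y :
  restr_perm (porbit s x) s y = if y \in porbit s x then s y else y.
Proof.
have sN : (s \in 'N(porbit s x | 'P))%g.
  by apply/astabsP => z; rewrite /= mem_porbit_perm.
case: ifP => yx; first by rewrite restr_permE.
by rewrite (out_perm (restr_perm_on _ _)) ?yx.
Qed.

Lemma restr_porbitVE s x y :
  ((restr_perm (porbit s x) s)^-1)%g y =
    if y \in porbit s x then (s^-1)%g y else y.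
Proof.
case: ifP => yx; last by rewrite (out_perm (perm_onV (restr_perm_on _ _))) ?yx.
apply: (canLR (permK (restr_perm (porbit s x) s))).
by rewrite restr_porbitE mem_porbit_permV yx permKV.
Qed.

Lemma prod_perm_disjointE (I : eqType) (r : seq I) (O : I -> {set T})
    (f : I -> {perm T}) (g : T -> T) :
  uniq r ->
  {in r, forall o x, f o x = if x \in O o then g x else x} ->
  {in r, forall o x, x \in O o -> g x \in O o} ->
  {in r &, forall o1 o2 x, x \in O o1 -> x \in O o2 -> o1 = o2} ->
  forall x, (\prod_(o <- r) f o)%g x =
              if has (fun o => x \in O o) r then g x else x.
Proof.
elim: r => [|a r IH] /=; first by move=> *; rewrite big_nil perm1.
move=> /andP[aNr r_uniq] fE gO Odisj x.
have sub_r o : o \in r -> o \in a :: r by rewrite inE => ->; rewrite orbT.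
have {}IH := IH r_uniq (fun o h => fE o (sub_r _ h))
  (fun o h => gO o (sub_r _ h))
  (fun o1 o2 h1 h2 => Odisj o1 o2 (sub_r _ h1) (sub_r _ h2)).
rewrite big_cons permM fE ?mem_head //; case: ifP => xa /=; rewrite IH //.
have gxa := gO a (mem_head _ _) x xa.
case: hasP => //= -[o o_r gxo].
have ao := Odisj a o (mem_head _ _) (sub_r _ o_r) _ gxa gxo.
by rewrite ao o_r in aNr.
Qed.

End PermOrbits.

Section CycleClass.
Variable n : nat.
Implicit Types (s t : 'S_n) (x : 'I_n).

Definition orient_cycles s (e : {ffun {set 'I_n} -> bool}) : 'S_n :=
  (\prod_(O in porbits s | (1 < #|O|)%N)
     (if e O then restr_perm O s else (restr_perm O s)^-1))%g.

Lemma cycle_classE s : cycle_class s = [set orient_cycles s e | e in predT].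
Proof. by []. Qed.

Lemma orient_cyclesE s e x :
  orient_cycles s e x =
    if (1 < #|porbit s x|)%N then
      (if e (porbit s x) then s x else (s^-1)%g x)
    else x.
Proof.
rewrite /orient_cycles -big_filter; set r := filter _ _.
have mem_r O : (O \in r) = (O \in porbits s) && (1 < #|O|)%N.
  by rewrite mem_filter mem_index_enum andbT.
have orbit_r O : O \in r -> exists y, O = porbit s y.
  by rewrite mem_r => /andP[/imsetP[y _ ->] _]; exists y.
rewrite (@prod_perm_disjointE _ _ r id _
   (fun y => if e (porbit s y) then s y else (s^-1)%g y)).
- congr (if _ then _ else _); apply/hasP/idP => [[O O_r xO]|big].
    have [y Oy] := orbit_r _ O_r; move: O_r xO; rewrite mem_r Oy.
    by rewrite -eq_porbit_mem => /andP[_ ?] /eqP ->.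
  by exists (porbit s x); [rewrite mem_r big andbT imset_f | exact: porbit_id].
- by rewrite filter_uniq // index_enum_uniq.
- move=> O /orbit_r [y ->] z /=.
  case: ifP => ey; rewrite ?restr_porbitE ?restr_porbitVE; case: ifP => // zy;
  by rewrite (eqP (etrans (eq_porbit_mem _ _ _) zy)) ey.
- move=> O /orbit_r [y ->] z /= zy.
  by case: ifP => _; rewrite ?mem_porbit_perm ?mem_porbit_permV.
- move=> O1 O2 /orbit_r [y1 ->] /orbit_r [y2 ->] z /=.
  by rewrite -!eq_porbit_mem => /eqP <- /eqP <-.
Qed.

Lemma orient_cycles_Sclass s e : orient_cycles s e \in Sclass s.
Proof.
set u := orient_cycles s e; have uE := orient_cyclesE s e.
rewrite inE; apply/andP; split; apply/SsuppP => x.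
  rewrite uE; case: ifP => big; first by case: ifP => _; rewrite eqxx ?orbT.
  by rewrite (fixed_small_porbit (negbT big)) eqxx.
case big: (1 < #|porbit s x|)%N; last first.
  by rewrite uE big (fixed_small_porbit (negbT big)) eqxx.
case ex: (e (porbit s x)); first by rewrite uE big ex eqxx.
apply/orP; right; rewrite -{1}(permK u (s x)).
by rewrite uE porbit_perm1 big ex permK eqxx.
Qed.

Definition agree_cycles s t : {ffun {set 'I_n} -> bool} :=
  [ffun O : {set 'I_n} => [forall y in O, t y == s y]].

Lemma Sclass_orient_cycles s t :
  t \in Sclass s -> t = orient_cycles s (agree_cycles s t).
Proof.
move=> ts; have /SsuppP tsupp := Sclass_Ssupp ts.
apply/permP => x; rewrite orient_cyclesE ffunE.
case: ifP => big; last first.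
  have sx := fixed_small_porbit (negbT big).
  have sVx : (s^-1)%g x = x by rewrite -{1}sx permK.
  by move: (tsupp x); rewrite sx sVx orbb => /eqP.
case: ifP => [/forall_inP agree|/negbT/forall_inPn [y yx tyNs]].
  by apply/eqP; apply: agree; apply: porbit_id.
rewrite porbit_sym in yx; case/porbitP: yx => k ->.
rewrite -(Sclass_agree_expg _ k ts) in tyNs.
by case/orP: (tsupp ((s ^+ k)%g y)) tyNs => /eqP ->; rewrite ?eqxx.
Qed.

Lemma cycle_class_Sclass s : cycle_class s = Sclass s.
Proof.
apply/setP => t; rewrite cycle_classE; apply/imsetP/idP => [[e _ ->]|ts].
  exact: orient_cycles_Sclass.
by exists (agree_cycles s t); last exact: Sclass_orient_cycles.
Qed.

End CycleClass.

Section SmatSupportSums.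
Variables (T : finType) (V : nmodType).

(* Ssupp s is the disjoint union of Sclass s and classes Sclass t with
   Ssupp t \proper Ssupp s, so this is a Moebius inversion on #|Ssupp s|. *)
Lemma Sclass_sums_eq0 (F : {perm T} -> V) :
  (forall s, \sum_(t in Ssupp s) F t = 0) ->
  forall s, \sum_(t in Sclass s) F t = 0.
Proof.
move=> Ssupp_F0 s; move: {2}#|Ssupp s|.+1 (ltnSn #|Ssupp s|) => k.
elim: k s => [//|k IH] s ltsk.
have := Ssupp_F0 s; rewrite (big_setID (Sclass s)) /=.
rewrite (setIidPr _); last by apply/subsetP => t; apply: Sclass_Ssupp.
rewrite (sum_classes_eq0 (@Sclass_refl T) (@Sclass_sym T) (@Sclass_trans T)
  (F := F) (X := Ssupp s :\: Sclass s)) ?addr0 //.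
- move=> u; rewrite in_setD => /andP[uNs us] r ru; have /Sclass_Ssupp rsu := ru.
  rewrite in_setD (Ssupp_trans rsu us) andbT.
  by apply: contra uNs => rs; apply: Sclass_trans rs; rewrite Sclass_sym.
- move=> u; rewrite in_setD => /andP[uNs us]; apply: IH.
  rewrite ltnS in ltsk; apply: leq_trans ltsk.
  exact/proper_card/Ssupp_proper.
Qed.

End SmatSupportSums.

Section SmatExpansion.
Variables (C : comNzRingType) (n : nat).
Implicit Types (s t : 'S_n) (A : 'M[C]_n).

Lemma Smat_sym s : is_symmetric (Smat C s).
Proof.
apply/matrixP => i j; rewrite !mxE orbC.
by congr (nat_of_bool (_ || _))%:R; apply/eqP/eqP => <-; rewrite ?permK ?permKV.
Qed.

Lemma prod_Smat s t : \prod_i Smat C s i (t i) = (t \in Ssupp s)%:R.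
Proof.
have [/SsuppP ts|] := boolP (t \in Ssupp s).
  by rewrite big1 // => i _; rewrite mxE (eq_sym (s i)) (eq_sym _ (t i)) ts.
rewrite inE negb_forall => /existsP[i tiN].
by rewrite (bigD1 i) //= mxE (eq_sym (s i)) (eq_sym _ (t i)) (negPf tiN) mul0r.
Qed.

Lemma gimm_Smat (G : {group 'S_n}) (chi : 'S_n -> C) s :
  gimm G chi (Smat C s) = \sum_(t in Ssupp s) ext0 G chi t.
Proof.
rewrite /gimm [RHS]big_mkcond; apply: eq_bigr => t _.
by rewrite prod_Smat; case: (t \in Ssupp s); rewrite ?mulr1 ?mulr0.
Qed.

Lemma gimmB (G1 G2 : {group 'S_n}) (chi1 chi2 : 'S_n -> C) A :
  gimm G1 chi1 A - gimm G2 chi2 A =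
    \sum_t (ext0 G1 chi1 t - ext0 G2 chi2 t) * \prod_i A i (t i).
Proof. by rewrite -sumrB; apply: eq_bigr => t _; rewrite mulrBl. Qed.

(* On the positions where t and s differ, t i = s^-1 i, and these positions
   form an s-stable set, so reindexing by s^-1 there and using symmetry
   matches the two products. *)
Lemma prod_Sclass A s t : is_symmetric A -> t \in Sclass s ->
  \prod_i A i (t i) = \prod_i A i (s i).
Proof.
move=> symA ts; have /SsuppP tsupp := Sclass_Ssupp ts.
rewrite (bigID (fun i => t i == s i)) [RHS](bigID (fun i => t i == s i)) /=.
congr (_ * _); first by apply: eq_bigr => i /eqP ->.
rewrite [in RHS](reindex_inj (@perm_inj _ (s^-1)%g)) /=; apply: eq_big => i.
  by have := Sclass_agree_perm ((s^-1)%g i) ts; rewrite !permKV => ->.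
move=> tiN; move: (tsupp i); rewrite (negPf tiN) => /eqP ->.
by rewrite permKV -{1}symA mxE.
Qed.

Lemma sum_prod_sym_eq0 (F : 'S_n -> C) A : is_symmetric A ->
  (forall s, \sum_(t in Sclass s) F t = 0) ->
  \sum_t F t * \prod_i A i (t i) = 0.
Proof.
move=> symA F0; rewrite (eq_bigl (mem [set: 'S_n])); last first.
  by move=> t; rewrite /= in_setT.
apply: (sum_classes_eq0 (@Sclass_refl _) (@Sclass_sym _) (@Sclass_trans _)).
  by move=> ? _ ? _; apply: in_setT.
move=> s _; rewrite (eq_bigr (fun t => F t * \prod_i A i (s i))).
  by rewrite -mulr_suml F0 mul0r.
by move=> t ts; rewrite (prod_Sclass symA ts).
Qed.

End SmatExpansion.

Theorem mainTheorem6 (C : numClosedFieldType) (n : nat) (hn : (1 <= n)%N)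
  (H K : {group 'S_n}) (phi psi : 'S_n -> C) :
  [/\ ((forall A : 'M[C]_n, is_symmetric A -> gimm H phi A = gimm K psi A) <->
        (forall s : 'S_n, gimm H phi (Smat C s) = gimm K psi (Smat C s))),
      ((forall s : 'S_n, gimm H phi (Smat C s) = gimm K psi (Smat C s)) <->
        (forall s : 'S_n, \sum_(t in cycle_class s) ext0 H phi t =
                          \sum_(t in cycle_class s) ext0 K psi t)) &
      ((forall A : 'M[C]_n, is_symmetric A -> gimm H phi A = gimm K psi A) <->
        (forall s : 'S_n, \sum_(t in cycle_class s) ext0 H phi t =
                          \sum_(t in cycle_class s) ext0 K psi t))].
Proof.
set P1 := forall A : 'M[C]_n, _; set P2 := forall s : 'S_n, gimm H phi _ = _.
set P3 := forall s : 'S_n, \sum_(t in _) _ = _.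
have P1_P2 : P1 -> P2 by move=> eq1 s; apply: eq1; apply: Smat_sym.
have P2_P3 : P2 -> P3.
  move=> eq2 s; apply/eqP; rewrite -subr_eq0 -sumrB cycle_class_Sclass.
  apply/eqP; apply: Sclass_sums_eq0 => {}s.
  by rewrite sumrB -!gimm_Smat eq2 subrr.
have P3_P1 : P3 -> P1.
  move=> eq3 A symA; apply/eqP; rewrite -subr_eq0 gimmB; apply/eqP.
  apply: sum_prod_sym_eq0 => // s.
  by rewrite sumrB -cycle_class_Sclass eq3 subrr.
split; split; [exact: P1_P2 | by move/P2_P3/P3_P1 | exact: P2_P3 |
  by move/P3_P1/P1_P2 | by move/P1_P2/P2_P3 | exact: P3_P1].
Qed.
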